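(* Let $n\ge2$, let $a_1,\dots,a_n$ be positive integers, let $1\le k\le n$ with $a_k>1$, and let $s=[2a_1,-2a_2,\dots,(-1)^{k-1}2a_k,\dots,(-1)^{n-1}2a_n]$ and $r=[2a_1,-2a_2,\dots,(-1)^{k-1}2(a_k-1),\dots,(-1)^{n-1}2a_n]$ (the same sequence with $a_k$ replaced by $a_k-1$). Then $\Delta_{K(s)}$ and $\Delta_{K(r)}$ have only real zeros and $\delta(K(s))<\delta(K(r))$, where $\delta(K)$ denotes the largest zero of $\Delta_K(t)$.
   Context: For a finite sequence $r=[2a_1,2a_2,\dots,2a_n]$ of nonzero even integers, $K(r)$ denotes the 2-bridge knot or link whose associated rational number has the even continued fraction expansion $1/(2a_1-1/(2a_2-\cdots-1/(2a_n)))$. Let $M(r)$ be the $n\times n$ integer matrix whose $(k,k)$-entry is $a_k$, whose $(k,k+1)$-entry is $1$ ($1\le k\le n-1$), and whose other entries are $0$; $\Delta_{K(r)}(t)=\det(tM(r)-M(r)^T)$ is the (reduced) Alexander polynomial of $K(r)$ (up to sign). *)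

From HB Require Import structures.
From mathcomp Require Import all_boot all_order all_algebra all_field.
Set Implicit Arguments. Unset Strict Implicit. Unset Printing Implicit Defensive.
Import Order.TTheory GRing.Theory Num.Theory.
Local Open Scope ring_scope.

(* The matrix M(r) for r = [2 b_1, ..., 2 b_n], indexed from 0:
   b : nat -> int gives b_{i+1} = b i.  Entry (i,i) = b i, entry (i,i+1) = 1. *)
Definition Mmat (n : nat) (b : nat -> int) : 'M[int]_n :=
  \matrix_(i < n, j < n)
    (if i == j then b i else if (j == i.+1 :> nat) then 1 else 0).

Definition alex (n : nat) (b : nat -> int) : {poly int} :=
  \det (\matrix_(i < n, j < n) ('X * ((Mmat n b) i j)%:P - ((Mmat n b) j i)%:P)).

Definition zero_of (p : {poly int}) (z : algC) : Prop :=
  root (map_poly (intr : int -> algC) p) z.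

Definition only_real_zeros (p : {poly int}) : Prop :=
  forall z : algC, zero_of p z -> z \is Num.real.

Definition largest_zero (p : {poly int}) (d : algC) : Prop :=
  zero_of p d /\ forall z : algC, zero_of p z -> z <= d.

(* Alternating sequence [2a_1, -2a_2, ..., (-1)^{n-1} 2a_n], halved and 0-indexed. *)
Definition alt_seq (a : nat -> nat) (i : nat) : int := (-1) ^+ i * (a i)%:Z.

Definition dec_at (a : nat -> nat) (k : nat) (i : nat) : nat :=
  if i == k then (a i).-1 else a i.

(* 1. t M - M^T is tridiagonal, so its determinant satisfies a three-term
      recurrence; for the alternating sequence it equals, up to a sign,
      P_n(t) where P_0 = 1, P_1 = a_1 (t - 1),
      P_(m+2) = a_(m+2) (t - 1) P_(m+1) - t P_m.
   2. With t = u^2 one has P_m(u^2) = u^m F_m(u - 1/u), where F_m is the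
      continuant F_0 = 1, F_1 = a_1 x, F_(m+2) = a_(m+2) x F_(m+1) - F_m.
   3. The cross identity for two continuants with coefficient sequences c, d,
        K(c)_(j+1) K(d)_j - K(d)_(j+1) K(c)_j = sum_(i<=j) (c_i - d_i) K(c)_i K(d)_i,
      shows that every complex zero of F_n is real (d = complex conjugate of
      c), and, at the largest zero of F_n, that lowering a weight moves the
      largest zero to the right (c_i = a_i z, d_i = b_i z).
   4. Over a real closed field, the intermediate value theorem and the
      Wronskian F'_(m+1) F_m - F_(m+1) F'_m = sum_i a_i F_i^2 show that
      F_0, ..., F_(n-1) are positive at the largest zero x_max of F_n.
   5. u |-> u - 1/u is an increasing bijection from the positive reals onto
      the reals; hence every zero of P_n is the square of a positive u with
      u - 1/u a zero of F_n, and the largest zero of P_n is U(x_max)^2, where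
      U is the inverse bijection.  This value is increasing in x_max. *)
From HB Require Import structures.
From mathcomp Require Import all_boot all_order all_algebra all_field.
From mathcomp Require Import ring lra zify polyrcf.
Import Order.TTheory GRing.Theory Num.Theory.
Local Open Scope ring_scope.
Set Implicit Arguments. Unset Strict Implicit. Unset Printing Implicit Defensive.

Lemma nat_ind2 (P : nat -> Prop) :
  P 0%N -> P 1%N -> (forall m, P m -> P m.+1 -> P m.+2) -> forall m, P m.
Proof.
move=> P0 P1 PS m; suff : P m /\ P m.+1 by case.
by elim: m => [|m [Pm Pm1]]; split => //; apply: PS.
Qed.

Lemma ord_max_ltF m (i : 'I_m.+1) : (m < i)%N = false.
Proof. by rewrite ltnNge -ltnS ltn_ord. Qed.

Section Tridiagonal.
Variable R : comPzRingType.
Variable f : nat -> nat -> R.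
Hypothesis f_band : forall i j, (j.+1 < i)%N \/ (i.+1 < j)%N -> f i j = 0.

Definition tridiag n : 'M[R]_n := \matrix_(i < n, j < n) f i j.

Lemma sign_double (m : nat) : (-1) ^+ (m + m) = 1 :> R.
Proof. by rewrite -signr_odd oddD addbb. Qed.

(* Laplace expansion along the last row, then the last column. *)
Lemma det_tridiag_rec n : \det (tridiag n.+2) =
  f n.+1 n.+1 * \det (tridiag n.+1) - f n.+1 n * f n n.+1 * \det (tridiag n).
Proof.
rewrite (expand_det_row _ ord_max) big_ord_recr big_ord_recr /=.
rewrite big1 ?add0r; last first.
  move=> j _; rewrite mxE f_band ?mul0r //; left => /=.
  by rewrite ltnS (leq_trans (ltn_ord j)).
have minor1 : row' ord_max (col' ord_max (tridiag n.+2)) = tridiag n.+1.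
  by apply/matrixP => i j; rewrite !mxE /= /bump !ord_max_ltF.
rewrite /cofactor minor1 !mxE /= sign_double mul1r addrC; congr (_ + _).
set B := row' _ _.
rewrite (expand_det_col _ ord_max) big_ord_recr /= big1 ?add0r; last first.
  move=> i _; rewrite !mxE /= /bump leqnn ltnNge (ltnW (ltn_ord i)) /=.
  by rewrite f_band ?mul0r //; right; rewrite add1n add0n ltnS ltn_ord.
have minor2 : row' ord_max (col' ord_max B) = tridiag n.
  apply/matrixP => i j; rewrite !mxE /= /bump.
  have [-> ->] : (n <= i)%N = false /\ (n <= j)%N = false.
    by rewrite leqNgt ltn_ord leqNgt ltn_ord.
  by rewrite /= !add0n ltnNge (ltnW (ltn_ord i)) leqNgt ltn_ord.
rewrite /cofactor minor2 !mxE /= /bump ltnn leqnn /= add0n sign_double mul1r.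
rewrite -signr_odd addSn /= oddD addbb /= expr1.
ring.
Qed.
End Tridiagonal.

Definition seifert_entry (b : nat -> int) (i j : nat) : int :=
  if i == j then b i else if j == i.+1 then 1 else 0.
Definition alex_entry (b : nat -> int) (i j : nat) : {poly int} :=
  'X * (seifert_entry b i j)%:P - (seifert_entry b j i)%:P.

Lemma alex_entry_band b i j :
  (j.+1 < i)%N \/ (i.+1 < j)%N -> alex_entry b i j = 0.
Proof.
move=> far; rewrite /alex_entry /seifert_entry.
have [-> -> -> ->] : [/\ (i == j) = false, (j == i) = false,
    (j == i.+1) = false & (i == j.+1) = false] by split; apply/eqP; lia.
by rewrite mulr0 subr0.
Qed.

Lemma alex_tridiag n b : alex n b = \det (tridiag (alex_entry b) n).
Proof. by congr (\det _); apply/matrixP => i j; rewrite !mxE. Qed.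

(* P_m(t), equal to the Alexander polynomial of K([2a_1, -2a_2, ...]) up to sign. *)
Fixpoint alexP (R : nzRingType) (a : nat -> nat) (m : nat) : {poly R} :=
  match m with
  | 0 => 1
  | 1 => (a 0%N)%:R * ('X - 1)
  | (m1.+1 as m2).+1 => (a m2)%:R * ('X - 1) * alexP R a m2 - 'X * alexP R a m1
  end.
Arguments alexP : clear implicits.

Lemma alexP_SS (R : nzRingType) a m :
  alexP R a m.+2 = (a m.+1)%:R * ('X - 1) * alexP R a m.+1 - 'X * alexP R a m.
Proof. by []. Qed.

Lemma map_alexP (R S : nzRingType) (f : {rmorphism R -> S}) a m :
  map_poly f (alexP R a m) = alexP S a m.
Proof.
elim/nat_ind2: m => [||m IH0 IH1]; first by rewrite rmorph1.
  by rewrite /= rmorphM rmorph_nat rmorphB /= map_polyX rmorph1.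
by rewrite !alexP_SS rmorphB !rmorphM rmorph_nat rmorphB /= map_polyX rmorph1 IH0 IH1.
Qed.

Fixpoint alt_sign (m : nat) : int :=
  if m is m'.+1 then (-1) ^+ m' * alt_sign m' else 1.

Lemma alt_sign_SS m : alt_sign m.+2 = - alt_sign m.
Proof.
rewrite /= mulrA -exprD addSn -signr_odd /= oddD addbb /= expr1.
by rewrite mulN1r.
Qed.

Lemma alt_sign_neq0 m : alt_sign m != 0.
Proof. by elim: m => [|m IH] //=; rewrite mulf_neq0 // signr_eq0. Qed.

Lemma alex_alt_seq a m : alex m (alt_seq a) = (alt_sign m)%:P * alexP int a m.
Proof.
elim/nat_ind2: m => [||m IH0 IH1].
- by rewrite alex_tridiag det_mx00 mul1r.
- rewrite alex_tridiag det_mx11 !mxE /alex_entry /seifert_entry /alt_seq /=.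
  by rewrite expr0 !mul1r -natz polyC_natr mulrBr mulr1 mulrC.
rewrite alex_tridiag det_tridiag_rec; last exact: alex_entry_band.
rewrite -!alex_tridiag IH0 IH1 alt_sign_SS alexP_SS.
move: (alexP int a m.+1) (alexP int a m) => P1 P0.
rewrite /alex_entry /seifert_entry !eqxx /alt_seq.
have [-> -> ->] : [/\ (m.+1 == m) = false, (m == m.+1) = false
   & (m == m.+2) = false] by split; apply/eqP; lia.
rewrite /= -polyC_natr natz exprS -signr_odd.
by case: (odd m); rewrite ?expr0 ?expr1 !(polyCM, polyCN, polyC1, polyC0); ring.
Qed.

Lemma zero_of_alex a n z : zero_of (alex n (alt_seq a)) z <-> root (alexP algC a n) z.
Proof.
rewrite /zero_of alex_alt_seq rmorphM /= map_polyC map_alexP rootM rootC /=.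
by rewrite intr_eq0 (negbTE (alt_sign_neq0 n)).
Qed.

Lemma alexP_at0 (R : comNzRingType) a m :
  (alexP R a m.+1).[0] = - (a m)%:R * (alexP R a m).[0].
Proof.
case: m => [|m]; first by rewrite /= -polyC_natr !hornerE; ring.
by rewrite alexP_SS -!polyC_natr !hornerE; ring.
Qed.

(* 0 is never a zero of P_m, so every zero of P_m has a square root u != 0. *)
Lemma alexP_at0_neq0 (R : numDomainType) a m :
  (forall i, (i < m)%N -> (0 < a i)%N) -> (alexP R a m).[0] != 0.
Proof.
elim: m => [|m IH] a_pos; first by rewrite hornerC oner_eq0.
rewrite alexP_at0 mulf_neq0 ?oppr_eq0 ?pnatr_eq0 -?lt0n ?a_pos //.
by apply: IH => i im; apply: a_pos; apply: ltnW.
Qed.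

Fixpoint cont (R : nzRingType) (c : nat -> R) (m : nat) : R :=
  match m with
  | 0 => 1
  | 1 => c 0%N
  | (m1.+1 as m2).+1 => c m2 * cont c m2 - cont c m1
  end.

Lemma cont_SS (R : nzRingType) (c : nat -> R) m :
  cont c m.+2 = c m.+1 * cont c m.+1 - cont c m.
Proof. by []. Qed.

Lemma eq_cont (R : nzRingType) (c d : nat -> R) : c =1 d -> cont c =1 cont d.
Proof.
move=> cd; elim/nat_ind2 => [||m IH0 IH1]; [by [] | exact: cd |].
by rewrite !cont_SS IH0 IH1 cd.
Qed.

Lemma rmorph_cont (R S : nzRingType) (f : {rmorphism R -> S}) c m :
  f (cont c m) = cont (f \o c) m.
Proof.
elim/nat_ind2: m => [||m IH0 IH1]; [exact: rmorph1 | by [] |].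
by rewrite !cont_SS rmorphB rmorphM IH0 IH1.
Qed.

Lemma rmorph_cont_nat (R S : nzRingType) (f : {rmorphism R -> S}) a (x : R) m :
  f (cont (fun i => (a i)%:R * x) m) = cont (fun i => (a i)%:R * f x) m.
Proof. by rewrite rmorph_cont; apply: eq_cont => i /=; rewrite rmorphM rmorph_nat. Qed.

Lemma cont_cross (R : comNzRingType) (c d : nat -> R) j :
  cont c j.+1 * cont d j - cont d j.+1 * cont c j =
  \sum_(i < j.+1) (c i - d i) * (cont c i * cont d i).
Proof.
elim: j => [|j IH]; first by rewrite big_ord1 /=; ring.
rewrite big_ord_recr -IH !cont_SS.
by set C := cont c j.+1; set D := cont d j.+1; rewrite /=; ring.
Qed.

Definition Fpoly (R : nzRingType) (a : nat -> nat) (m : nat) : {poly R} :=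
  cont (fun i => (a i)%:R * 'X) m.

Lemma horner_Fpoly (R : comNzRingType) a m (y : R) :
  (Fpoly R a m).[y] = cont (fun i => (a i)%:R * y) m.
Proof.
rewrite /Fpoly -[LHS]/(horner_eval y _) rmorph_cont.
by apply: eq_cont => i /=; rewrite horner_evalE hornerMX -polyC_natr hornerC.
Qed.

Lemma Fpoly_wronskian (R : comNzRingType) a m :
  (Fpoly R a m.+1)^`() * Fpoly R a m - Fpoly R a m.+1 * (Fpoly R a m)^`() =
  \sum_(i < m.+1) (a i)%:R * Fpoly R a i ^+ 2.
Proof.
rewrite /Fpoly; elim: m => [|m IH].
  by rewrite big_ord_recr big_ord0 /= add0r -polyC_natr !derivE; ring.
rewrite cont_SS big_ord_recr -IH -!polyC_natr !derivE /=; ring.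
Qed.

Lemma alexP_square (K : fieldType) a m (u : K) : u != 0 ->
  (alexP K a m).[u ^+ 2] = u ^+ m * cont (fun i => (a i)%:R * (u - u^-1)) m.
Proof.
move=> u0; elim/nat_ind2: m => [||m IH0 IH1]; first by rewrite hornerE expr0 mulr1.
  by rewrite /= -polyC_natr !hornerE /=; field.
by rewrite alexP_SS cont_SS -!polyC_natr !hornerE IH0 IH1 !exprS; field.
Qed.

Lemma sub_inv_lt (R : realFieldType) :
  {in Num.pos &, {homo (fun u : R => u - u^-1) : u w / u < w}}.
Proof.
move=> u w u0 w0 uw /=.
have : w^-1 < u^-1 by rewrite ltf_pV2.
lra.
Qed.

Lemma sub_inv_le (R : realFieldType) :
  {in Num.pos &, {mono (fun u : R => u - u^-1) : u w / u <= w}}.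
Proof. exact: le_mono_in (@sub_inv_lt R). Qed.

(* The positive solution u of u - 1/u = x. *)
Definition inv_sub_inv (R : rcfType) (x : R) : R := (x + Num.sqrt (x ^+ 2 + 4)) / 2.

Lemma inv_sub_invP (R : rcfType) (x : R) :
  0 < inv_sub_inv x /\ inv_sub_inv x - (inv_sub_inv x)^-1 = x.
Proof.
rewrite /inv_sub_inv; set s := Num.sqrt (x ^+ 2 + 4).
have s_ge0 : 0 <= s by apply: sqrtr_ge0.
have s2 : s ^+ 2 = x ^+ 2 + 4 by rewrite sqr_sqrtr // addr_ge0 // sqr_ge0.
have xs_gt0 : 0 < x + s by nra.
split; first by rewrite divr_gt0.
apply/eqP; rewrite -subr_eq0; apply/eqP.
have -> : (x + s) / 2 - ((x + s) / 2)^-1 - x = (s ^+ 2 - (x ^+ 2 + 4)) / (2 * (x + s)).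
  by field; rewrite gt_eqF.
by rewrite s2 subrr mul0r.
Qed.

Lemma inv_sub_inv_lt (R : rcfType) (x y : R) : x < y -> inv_sub_inv x < inv_sub_inv y.
Proof.
have [u_gt0 u_sub] := inv_sub_invP x; have [w_gt0 w_sub] := inv_sub_invP y.
have := sub_inv_le w_gt0 u_gt0; rewrite /= u_sub w_sub => le_eq.
by move=> xy; rewrite ltNge -le_eq -ltNge.
Qed.

(* A nonzero complex v with v - 1/v real is itself real: v + 1/v = +-sqrt((v - 1/v)^2 + 4). *)
Lemma real_of_sub_inv_real (v : algC) :
  v != 0 -> v - v^-1 \is Num.real -> v \is Num.real.
Proof.
move=> v0 xr.
have ev : v = ((v + v^-1) + (v - v^-1)) / 2 by field.
have wx : (v + v^-1) ^+ 2 = (v - v^-1) ^+ 2 + 4 by field.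
move: ev wx xr; move: (v + v^-1) (v - v^-1) => w x ev wx xr.
have wr : w \is Num.real.
  have : w ^+ 2 == sqrtC (x ^+ 2 + 4) ^+ 2 by rewrite sqrtCK wx.
  rewrite eqf_sqr => /orP[] /eqP ->; rewrite ?rpredN sqrtC_real //;
    by rewrite addr_ge0 // real_exprn_even_ge0.
by rewrite ev rpredM ?rpredD ?rpredV // ger0_real // ler0n.
Qed.

Lemma psumr_gt0_at (R : numDomainType) n (F : 'I_n -> R) i0 :
  (forall i, 0 <= F i) -> 0 < F i0 -> 0 < \sum_i F i.
Proof.
move=> F_ge0 Fi0; rewrite (bigD1 i0) //= ltr_wpDr //.
exact: sumr_ge0.
Qed.

(* Every complex zero of F_(n+1) is real: the cross identity with the conjugate
   continuant gives (x - x^* ) sum_i a_i |F_i(x)|^2 = 0, and the sum is positive. *)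
Lemma cont_root_real (a : nat -> nat) n (x : algC) : (0 < a 0%N)%N ->
  cont (fun i => (a i)%:R * x) n.+1 = 0 -> x \is Num.real.
Proof.
move=> a0 Fn0; set F := cont (fun i => (a i)%:R * x) in Fn0 *.
have conjF j : (F j)^* = cont (fun i => (a i)%:R * x^*) j.
  exact: rmorph_cont_nat.
have := cont_cross (fun i => (a i)%:R * x) (fun i => (a i)%:R * x^*) n.
rewrite -!conjF -/F Fn0 conjC0 !mul0r subr0.
under eq_bigr => i _ do
  rewrite -conjF -/F -mulrBr [_ * (x - _)]mulrC -mulrA.
rewrite -mulr_sumr => /esym/eqP; rewrite mulf_eq0 subr_eq0 => /orP[/eqP xx|].
  exact/CrealP.
rewrite gt_eqF // (psumr_gt0_at (i0 := ord0)) => [//|i|]; last first.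
  by rewrite /F /= conjC1 !mulr1 ltr0n.
by rewrite mulr_ge0 ?ler0n ?mul_conjC_ge0.
Qed.

Lemma cont_ratio_lt (R : numDomainType) (a b : nat -> nat) (z : R) n k :
  0 < z -> (forall i, (i < n)%N -> (b i <= a i)%N) -> (k < n)%N -> (b k < a k)%N ->
  (forall i, (i < n)%N -> 0 < cont (fun i => (a i)%:R * z) i) ->
  (forall i, (i < n)%N -> 0 < cont (fun i => (b i)%:R * z) i) ->
  cont (fun i => (b i)%:R * z) n * cont (fun i => (a i)%:R * z) n.-1 <
  cont (fun i => (a i)%:R * z) n * cont (fun i => (b i)%:R * z) n.-1.
Proof.
move=> z_gt0 ba kn bk_lt A_pos B_pos; rewrite -subr_gt0.
have n_gt0 : (0 < n)%N by apply: leq_ltn_trans kn.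
have := cont_cross (fun i => (a i)%:R * z) (fun i => (b i)%:R * z) n.-1.
rewrite prednK // => ->; apply: (psumr_gt0_at (i0 := Ordinal kn)) => [i|] /=.
  apply: mulr_ge0; last by rewrite mulr_ge0 // ltW ?A_pos ?B_pos.
  by rewrite subr_ge0 ler_pM2r // ler_nat ba.
apply: mulr_gt0; last by rewrite mulr_gt0 ?A_pos ?B_pos.
by rewrite subr_gt0 ltr_pM2r // ltr_nat.
Qed.

Section LargestRoot.
Variable R : rcfType.

Lemma ge0_right_pos (p : {poly R}) z :
  (forall y, z < y -> 0 < p.[y]) -> 0 <= p.[z].
Proof.
move=> pos; rewrite leNgt; apply/negP => pz.
have [x /andP[zx _] px] : exists2 x, z <= x <= z + 1 & root p x.
  by apply: Num.Theory.poly_ivt; rewrite ?lerDl // (ltW pz) ltW // pos // ltrDl.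
have [xz|xz] := eqVneq x z; first by move: pz; rewrite -xz (rootP px) ltxx.
by have := pos x; rewrite lt_neqAle eq_sym xz zx (rootP px) ltxx => /(_ isT).
Qed.

Lemma deriv_ge0_root (p : {poly R}) z :
  root p z -> (forall y, z < y -> 0 < p.[y]) -> 0 <= p^`().[z].
Proof.
move=> /factor_theorem [q ->] pos.
rewrite derivM !derivE !hornerE subrr mulr0 add0r.
apply: ge0_right_pos => y zy; have := pos y zy.
by rewrite hornerM hornerXsubC pmulr_lgt0 // subr_gt0.
Qed.

Lemma sorted_last_ge (s : seq R) x0 x : sorted <%R s -> x \in s -> x <= last x0 s.
Proof.
case: s => // y s; elim: s x y => [|z s IH] x y /=.
  by rewrite inE => _ /eqP ->.
move=> /andP[yz zs]; rewrite inE => /predU1P[->|]; last exact: IH.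
exact: le_trans (ltW yz) (IH z z zs (mem_head _ _)).
Qed.

(* The largest real root of p (0 if p has none). *)
Definition maxroot (p : {poly R}) : R := last 0 (rootsR p).

Lemma maxroot_ge (p : {poly R}) x : p != 0 -> root p x -> x <= maxroot p.
Proof.
move=> p0 px; apply: sorted_last_ge; first exact: sorted_roots.
by rewrite -(roots_on_rootsR p0) px.
Qed.

Lemma maxroot_root (p : {poly R}) x : p != 0 -> root p x -> root p (maxroot p).
Proof.
move=> p0 px; suff : maxroot p \in rootsR p.
  by rewrite -(roots_on_rootsR p0) => /andP[].
rewrite /maxroot; case E: (rootsR p) => [|y s]; first last.
  by rewrite /= mem_last.
by move: (roots_on_rootsR p0 x); rewrite E px andbT in_nil.
Qed.

Lemma pos_above_roots (p : {poly R}) M : (forall y, M <= y -> 0 < p.[y]) ->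
  forall y, (forall x, root p x -> x < y) -> 0 < p.[y].
Proof.
move=> posM y above; have [/posM //|yM] := leP M y.
rewrite ltNge; apply/negP => py.
have [x /andP[yx _] px] : exists2 x, y <= x <= M & root p x.
  by apply: Num.Theory.poly_ivt; rewrite ?py ltW // posM.
by have := above x px; rewrite ltNge yx.
Qed.

Lemma pos_beyond_maxroot (p : {poly R}) M : (forall y, M <= y -> 0 < p.[y]) ->
  forall y, maxroot p < y -> 0 < p.[y].
Proof.
move=> posM y y_gt.
have p0 : p != 0.
  by apply: contraTneq _ (posM M (lexx M)) => ->; rewrite horner0 ltxx.
apply: (pos_above_roots posM) => x px.
exact: le_lt_trans (maxroot_ge p0 px) y_gt.
Qed.

Section Continuants.
Variables (a : nat -> nat) (n : nat).
Hypothesis a_pos : forall i, (i < n)%N -> (0 < a i)%N.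
Local Notation F j := (Fpoly R a j).

(* For y >= 2 the sequence F_j(y) is nondecreasing from F_0 = 1. *)
Lemma F_ge1 y : 2 <= y -> forall j, (j <= n)%N -> 1 <= (F j).[y].
Proof.
move=> y2; pose Fy := cont (fun i => (a i)%:R * y).
have a_ge1 i : (i < n)%N -> 1 <= (a i)%:R :> R by move=> /a_pos; rewrite ler1n.
suff incr j : (j < n)%N -> 1 <= Fy j <= Fy j.+1.
  case=> [|j] jn; rewrite horner_Fpoly ?lexx //.
  by have /andP[/le_trans] := incr j jn; apply.
elim: j => [|j IH] jn.
  by rewrite /Fy /= lexx mulr_ege1 ?a_ge1 // (le_trans _ y2) ?ler1n.
have /andP[F1 F12] := IH (ltnW jn).
rewrite (le_trans F1 F12) /Fy cont_SS -/(Fy j) -/(Fy j.+1).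
have : 2 * Fy j.+1 <= (a j.+1)%:R * y * Fy j.+1.
  apply: ler_wpM2r; first exact: le_trans ler01 (le_trans F1 F12).
  by have := ler_pM ler01 (ler0n _ 2) (a_ge1 _ jn) y2; rewrite mul1r.
lra.
Qed.

Lemma F_pos_ge2 j y : (j <= n)%N -> 2 <= y -> 0 < (F j).[y].
Proof. by move=> jn y2; apply: lt_le_trans ltr01 (F_ge1 y2 jn). Qed.

Lemma F_neq0 j : (j <= n)%N -> F j != 0.
Proof.
move=> jn; apply: contraTneq _ (F_pos_ge2 jn (lexx 2)) => ->.
by rewrite horner0 ltxx.
Qed.

Lemma F_pos_beyond j : (j <= n)%N -> forall y, maxroot (F j) < y -> 0 < (F j).[y].
Proof. by move=> jn; apply: pos_beyond_maxroot => y; apply: F_pos_ge2. Qed.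

(* At a root z of F_(m+1) beyond which F_(m+1) is positive, F_m(z) > 0: the
   Wronskian at z equals F'_(m+1)(z) F_m(z), with F'_(m+1)(z) >= 0. *)
Lemma F_pos_at_root m z : (m < n)%N -> root (F m.+1) z ->
  (forall y, z < y -> 0 < (F m.+1).[y]) -> 0 < (F m).[z].
Proof.
move=> mn Fz pos; have dF := deriv_ge0_root Fz pos.
have := congr1 (horner^~ z) (Fpoly_wronskian R a m).
rewrite hornerD hornerN !hornerM (rootP Fz) mul0r subr0 horner_sum => W.
have sum_gt0 : 0 < \sum_(i < m.+1) ((a i)%:R * F i ^+ 2).[z].
  apply: (psumr_gt0_at (i0 := ord0)) => [i|].
    by rewrite -polyC_natr hornerCM horner_exp mulr_ge0 ?ler0n ?sqr_ge0.
  rewrite -polyC_natr hornerCM horner_exp /Fpoly /= hornerC expr1n mulr1.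
  by rewrite ltr0n a_pos // (leq_ltn_trans _ mn).
rewrite -W in sum_gt0; rewrite ltNge; apply/negP => Fm_le0.
by have := mulr_ge0_le0 dF Fm_le0; rewrite leNgt sum_gt0.
Qed.

(* Positivity on (c, +oo) propagates from F_(m+1) down to F_m: otherwise the
   largest root r > c of F_m would give F_(m+1)(r) = - F_(m-1)(r) < 0. *)
Lemma F_pos_step c m : (m < n)%N -> (forall y, c < y -> 0 < (F m.+1).[y]) ->
  forall y, c < y -> 0 < (F m).[y].
Proof.
move=> mn pos y cy; rewrite ltNge; apply/negP => Fy_le0.
case: m mn pos Fy_le0 => [|m] mn pos Fy_le0.
  by move: Fy_le0; rewrite /Fpoly /= hornerC ler10.
have y2 : y <= 2.
  rewrite leNgt; apply: contraTN Fy_le0 => y2.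
  by rewrite -ltNge F_pos_ge2 ?(ltnW mn) ?ltW.
have [x /andP[yx _] Fx] : exists2 x, y <= x <= 2 & root (F m.+1) x.
  by apply: Num.Theory.poly_ivt y2 _; rewrite Fy_le0 ltW // F_pos_ge2 // ltnW.
set r := maxroot (F m.+1).
have F_nz := F_neq0 (ltnW mn).
have Fr := maxroot_root F_nz Fx.
have Fm_r : 0 < (F m).[r].
  by apply: F_pos_at_root (ltnW mn) Fr (F_pos_beyond (ltnW mn)).
have := pos r (lt_le_trans cy (le_trans yx (maxroot_ge F_nz Fx))).
rewrite !horner_Fpoly cont_SS -!horner_Fpoly (rootP Fr) mulr0 sub0r oppr_gt0.
by rewrite ltNge (ltW Fm_r).
Qed.

Lemma F_pos_down c m : (m <= n)%N -> (forall y, c < y -> 0 < (F m).[y]) ->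
  forall j, (j <= m)%N -> forall y, c < y -> 0 < (F j).[y].
Proof.
elim: m => [|m IH] mn pos j; first by rewrite leqn0 => /eqP ->.
rewrite leq_eqVlt => /predU1P[->//|jm].
exact: IH (ltnW mn) (F_pos_step mn pos) j jm.
Qed.

(* F_n has a real root: otherwise it is positive everywhere, and so is F_1,
   which vanishes at 0. *)
Lemma F_has_root : (0 < n)%N -> exists x, root (F n) x.
Proof.
move=> n0; have F_nz := F_neq0 (leqnn n).
case E: (rootsR (F n)) => [|x s]; last first.
  by exists x; move: (roots_on_rootsR F_nz x); rewrite E mem_head => /andP[].
have pos : forall y, -1 < y -> 0 < (F n).[y].
  move=> y _; apply: (pos_above_roots (M := 2)) => [z|x Fx]; first exact: F_pos_ge2.
  by move: (roots_on_rootsR F_nz x); rewrite E Fx andbT in_nil.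
have := F_pos_down (leqnn n) pos n0 (ltrN10 R).
by rewrite horner_Fpoly /= mulr0 ltxx.
Qed.

Definition xmax : R := maxroot (F n).

Lemma xmax_root : (0 < n)%N -> root (F n) xmax.
Proof.
by move=> /F_has_root [x Fx]; apply: maxroot_root Fx; apply: F_neq0.
Qed.

Lemma xmax_prefix : (0 < n)%N -> forall j, (j < n)%N -> 0 < (F j).[xmax].
Proof.
move=> n0 j jn.
have pos_all := F_pos_down (leqnn n) (F_pos_beyond (leqnn n)).
have ge0 i : (i <= n)%N -> 0 <= (F i).[xmax].
  by move=> i_n; apply: ge0_right_pos => y; apply: pos_all.
rewrite lt_def ge0 ?(ltnW jn) // andbT.
case: j jn => [|j] jn; first by rewrite /Fpoly /= hornerC oner_eq0.
apply/negP => /eqP Fj0.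
have Fj_pos : 0 < (F j).[xmax].
  have Fr : root (F j.+1) xmax by apply/rootP.
  by apply: F_pos_at_root (ltnW jn) Fr _ => y; apply: pos_all (ltnW jn) y.
have := ge0 j.+2 jn.
rewrite !horner_Fpoly cont_SS -!horner_Fpoly Fj0 mulr0 sub0r oppr_ge0.
by rewrite leNgt Fj_pos.
Qed.

(* For n >= 2, xmax > 0 since F_1(xmax) = a_1 xmax > 0. *)
Lemma xmax_gt0 : (1 < n)%N -> 0 < xmax.
Proof.
move=> n1; have := xmax_prefix (ltnW n1) n1.
by rewrite horner_Fpoly /= pmulr_rgt0 // ltr0n a_pos // ltnW.
Qed.
End Continuants.
End LargestRoot.

(* If
   xmax b <= z := xmax a, then F^b_j(z) > 0 for j < n and F^b_n(z) >= 0, while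
   F^a_n(z) = 0; this contradicts cont_ratio_lt at z. *)
Lemma xmax_lt (R : rcfType) (a b : nat -> nat) n k : (1 < n)%N ->
  (forall i, (i < n)%N -> (0 < b i)%N) -> (forall i, (i < n)%N -> (b i <= a i)%N) ->
  (k < n)%N -> (b k < a k)%N -> xmax R a n < xmax R b n.
Proof.
move=> n1 b_pos ba kn bk_lt; have n0 := ltnW n1.
have a_pos i : (i < n)%N -> (0 < a i)%N.
  by move=> i_n; apply: leq_trans (b_pos i i_n) (ba i i_n).
rewrite ltNge; apply/negP => xb_le; set z := xmax R a n in xb_le.
have A_pos j : (j < n)%N -> 0 < cont (fun i => (a i)%:R * z) j.
  by move=> jn; rewrite -horner_Fpoly xmax_prefix.
have B_pos j : (j < n)%N -> 0 < cont (fun i => (b i)%:R * z) j.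
  move=> jn; rewrite -horner_Fpoly.
  have [<-|xb_neq] := eqVneq (xmax R b n) z; first exact: xmax_prefix.
  apply: (F_pos_down b_pos (leqnn n) (F_pos_beyond b_pos (leqnn n)) (ltnW jn)).
  by change (xmax R b n < z); rewrite lt_neqAle xb_neq xb_le.
have Bn : 0 <= (Fpoly R b n).[z].
  apply: ge0_right_pos => y zy.
  exact: (F_pos_beyond b_pos (leqnn n) (le_lt_trans xb_le zy)).
have := cont_ratio_lt (xmax_gt0 _ a_pos n1) ba kn bk_lt A_pos B_pos.
rewrite -!horner_Fpoly (rootP (xmax_root _ a_pos n0)) mul0r ltNge mulr_ge0 //.
by rewrite ltW // xmax_prefix // prednK.
Qed.

Definition delta (a : nat -> nat) (n : nat) : algC :=
  algRval (inv_sub_inv (xmax algR a n) ^+ 2).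

Section LargestZero.
Variables (a : nat -> nat) (n : nat).
Hypotheses (n_gt0 : (0 < n)%N) (a_pos : forall i, (i < n)%N -> (0 < a i)%N).

(* delta is a zero of P_n, since P_n(u^2) = u^n F_n(u - 1/u) = u^n F_n(xmax). *)
Lemma delta_root : root (alexP algC a n) (delta a n).
Proof.
have [u_gt0 u_sub] := inv_sub_invP (xmax algR a n).
set u := inv_sub_inv _ in u_gt0 u_sub *.
apply/rootP; rewrite /delta rmorphXn alexP_square ?fmorph_eq0 ?gt_eqF //.
rewrite -fmorphV -rmorphB u_sub -rmorph_cont_nat -horner_Fpoly.
by rewrite (rootP (xmax_root _ a_pos n_gt0)) rmorph0 mulr0.
Qed.

(* Step 5: a zero t = v^2 of P_n is real, with v - 1/v a real root of F_n,
   hence v <= U(xmax) and t <= delta. *)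
Lemma alexP_root_le t : root (alexP algC a n) t -> t \is Num.real /\ t <= delta a n.
Proof.
move=> t_root.
have t_neq0 : t != 0.
  by apply: contraTneq t_root => ->; rewrite /root alexP_at0_neq0.
set v := sqrtC t; have v_neq0 : v != 0 by rewrite sqrtC_eq0.
have tv : t = v ^+ 2 by rewrite sqrtCK.
have Fv : cont (fun i => (a i)%:R * (v - v^-1)) n = 0.
  move/rootP: t_root; rewrite tv alexP_square // => /eqP.
  by rewrite mulf_eq0 expf_eq0 (negbTE v_neq0) andbF => /eqP.
have vr : v \is Num.real.
  apply: real_of_sub_inv_real => //; move: Fv; rewrite -(prednK n_gt0).
  by apply: cont_root_real; apply: a_pos.
have t_ge0 : 0 <= t by rewrite tv real_exprn_even_ge0.
split; first by rewrite tv rpredX.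
pose v' := in_algR vr.
have v_gt0 : 0 < v by rewrite lt_def v_neq0 sqrtC_ge0.
have v'_gt0 : 0 < v' := v_gt0.
have Fv' : root (Fpoly algR a n) (v' - v'^-1).
  apply/rootP; apply/eqP; rewrite -(fmorph_eq0 algRval) horner_Fpoly.
  by rewrite rmorph_cont_nat rmorphB fmorphV /= Fv.
have [u_gt0 u_sub] := inv_sub_invP (xmax algR a n).
have le_v'u : v' <= inv_sub_inv (xmax algR a n).
  have := sub_inv_le v'_gt0 u_gt0; rewrite /= u_sub => <-.
  exact: maxroot_ge (F_neq0 _ a_pos (leqnn n)) Fv'.
have : v' ^+ 2 <= inv_sub_inv (xmax algR a n) ^+ 2.
  by rewrite ler_pXn2r // nnegrE ltW.
by rewrite tv /delta -[v]/(algRval v') -rmorphXn.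
Qed.

Lemma alex_largest_zero :
  only_real_zeros (alex n (alt_seq a)) /\ largest_zero (alex n (alt_seq a)) (delta a n).
Proof.
split; first by move=> z /zero_of_alex /alexP_root_le [].
split; first exact/zero_of_alex/delta_root.
by move=> z /zero_of_alex /alexP_root_le [].
Qed.
End LargestZero.

Lemma delta_lt (a b : nat -> nat) n :
  xmax algR a n < xmax algR b n -> delta a n < delta b n.
Proof.
have [ua_gt0 _] := inv_sub_invP (xmax algR a n).
have [ub_gt0 _] := inv_sub_invP (xmax algR b n).
move=> /inv_sub_inv_lt lt_ab.
have : inv_sub_inv (xmax algR a n) ^+ 2 < inv_sub_inv (xmax algR b n) ^+ 2.
  by rewrite ltr_pXn2r // nnegrE ltW.
exact.
Qed.

Unset Implicit Arguments.

Theorem theorem9p7 (n : nat) (a : nat -> nat) (k : nat) :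
  (2 <= n)%N ->
  (forall i, (i < n)%N -> (0 < a i)%N) ->
  (k < n)%N -> (1 < a k)%N ->
  only_real_zeros (alex n (alt_seq a)) /\
  only_real_zeros (alex n (alt_seq (dec_at a k))) /\
  exists ds dr : algC,
    largest_zero (alex n (alt_seq a)) ds /\
    largest_zero (alex n (alt_seq (dec_at a k))) dr /\
    ds < dr.
Proof.
move=> n_gt1 a_pos kn ak_gt1; set b := dec_at a k.
have b_pos i : (i < n)%N -> (0 < b i)%N.
  by move=> i_n; rewrite /b /dec_at; case: eqP => [->|_]; [lia | exact: a_pos].
have b_le i : (i < n)%N -> (b i <= a i)%N.
  by move=> _; rewrite /b /dec_at; case: eqP => // _; apply: leq_pred.
have bk_lt : (b k < a k)%N by rewrite /b /dec_at eqxx; lia.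
have [real_a largest_a] := alex_largest_zero (ltnW n_gt1) a_pos.
have [real_b largest_b] := alex_largest_zero (ltnW n_gt1) b_pos.
do 2!split => //; exists (delta a n), (delta b n); do 2!split => //.
by apply: delta_lt; apply: xmax_lt n_gt1 b_pos b_le kn bk_lt.
Qed.
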